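(* Let $p\in(0,1)$. For $n\ge1$, let $X_n$ be the maximum weight of a directed path from $1$ to $n$ in the transitive tournament on $\{1,\ldots,n\}$ with independent $\mathrm{Bernoulli}(p)$ edge weights. Let $f(n)=\mathbb{E}[X_n]$ for $n\ge1$, and $f(0)=0$ (so $f(0)=f(1)=0$). Then for every $n\ge1$, \[ f(n)=\sum_{i=2}^{n}\big(1-(1-p)^{i-1}\big)(1-p)^{\binom{i-1}{2}}\big(f(n-i+1)+1\big). \]
   Context: The transitive tournament on $\{1,\ldots,n\}$ has a directed edge $(i,j)$ for every $1\le i<j\le n$. Each edge independently has weight $1$ with probability $p$ and weight $0$ otherwise. The weight of a path is the sum of its edge weights. $\binom{0}{2}=\binom{1}{2}=0$. *)

From HB Require Import structures.
From mathcomp Require Import all_boot all_order all_algebra.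
Set Implicit Arguments. Unset Strict Implicit. Unset Printing Implicit Defensive.
Import Order.TTheory GRing.Theory Num.Theory.
Local Open Scope ring_scope.

(* Vertices of the transitive tournament on {1,...,n} are 'I_n (vertex k+1 is
   represented by k).  The edge (i,j) exists iff i < j. *)
Definition weighting (n : nat) := {ffun 'I_n * 'I_n -> bool}.

Definition wprob (R : realFieldType) (p : R) (n : nat) (w : weighting n) : R :=
  \prod_(e : 'I_n * 'I_n)
     (if (e.1 < e.2)%N then (if w e then p else 1 - p)
      else (if w e then 0 else 1)).

(* A directed path in the transitive tournament is an increasing sequence of
   vertices; it is determined by its vertex set A. *)
Definition path_of (n : nat) (A : {set 'I_n}) : seq 'I_n :=
  sort (fun a b : 'I_n => (a <= b)%N) (enum A).

Definition path_weight (n : nat) (w : weighting n) (s : seq 'I_n) : nat :=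
  \sum_(e <- zip s (behead s)) (w e : nat).

Definition is_path_1_n (n : nat) (A : {set 'I_n}) : bool :=
  [exists i in A, val i == 0%N] && [exists i in A, val i == n.-1].

Definition Xmax (n : nat) (w : weighting n) : nat :=
  \max_(A : {set 'I_n} | is_path_1_n A) path_weight w (path_of A).

Definition f (R : realFieldType) (p : R) (n : nat) : R :=
  match n with
  | 0 => 0
  | _ => \sum_(w : weighting n) wprob p w * (Xmax w)%:R
  end.

From mathcomp Require Import all_boot all_order all_algebra.
From mathcomp Require Import zify ring.
Import Order.TTheory GRing.Theory Num.Theory.
Set Implicit Arguments. Unset Strict Implicit. Unset Printing Implicit Defensive.

(* Number the vertices 0..n-1 and call k the first vertex entered by a weight-1 edge
   from an earlier vertex.  If there is no such k, every weight is 0 and X_n = 0.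
   Otherwise no route gains anything before it leaves {0..k-1}, it gains at most one
   on that edge, and it can be rerouted through a weight-1 edge into k; hence
   X_n = 1 + X', where X' is the heaviest route from k to n-1, a copy of X_(n-k)
   built from the edges inside {k..n-1}.  The event "k is first" only involves edges
   with both ends in {0..k}: the C(k,2) edges inside {0..k-1} are 0 and not all k
   edges into k are 0.  It therefore has probability (1-(1-p)^k)(1-p)^C(k,2) and is
   independent of X'.  Summing over k = i-1 gives the recursion. *)

Fixpoint walk_weight (W : nat -> nat -> bool) (x : nat) (s : seq nat) : nat :=
  if s is y :: s' then W x y + walk_weight W y s' else 0.

(* [s] lists the vertices visited after [x]; stating the endpoint as
   [(last x s).+1 == n] leaves no route at all when [n = 0]. *)
Definition route_from (n x : nat) (s : seq nat) : bool :=
  path ltn x s && ((last x s).+1 == n).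

Definition is_max_route_weight (n : nat) (W : nat -> nat -> bool) (m : nat) :=
  (forall s, route_from n 0 s -> walk_weight W 0 s <= m) /\
  exists2 s, route_from n 0 s & walk_weight W 0 s = m.

Definition wshift (k : nat) (W : nat -> nat -> bool) a b := W (a + k) (b + k).

Lemma leq_last x s z : path ltn x s -> z \in x :: s -> z <= last x s.
Proof.
elim: s x z => [|y s IH] x z /=; first by rewrite inE => _ /eqP ->.
case/andP=> xy ys; rewrite inE => /orP[/eqP ->|zs]; last exact: IH.
exact: leq_trans (ltnW xy) (IH _ _ ys (mem_head _ _)).
Qed.

Lemma route_from_ltn n x s : route_from n x s -> all (gtn n) (x :: s).
Proof. by case/andP=> xs /eqP <-; apply/allP => z /(leq_last xs). Qed.

Lemma walk_weight_eq_in N W1 W2 x s :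
  {in gtn N &, W1 =2 W2} -> all (gtn N) (x :: s) ->
  walk_weight W1 x s = walk_weight W2 x s.
Proof.
move=> eqW; elim: s x => [//|y s IH] x /= /and3P[xN yN sN].
by rewrite eqW // IH //= yN.
Qed.

Lemma walk_weight_eq0 N W x s :
  (forall a b, a < b < N -> W a b = false) ->
  path ltn x s -> all (gtn N) s -> walk_weight W x s = 0.
Proof.
move=> W0; elim: s x => [//|y s IH] x /= /andP[xy ys] /andP[yN sN].
by rewrite W0 ?xy // IH.
Qed.

Lemma walk_weight_shift W k x s :
  walk_weight (wshift k W) x s = walk_weight W (x + k) (map (addn^~ k) s).
Proof. by elim: s x => [//|y s IH] x /=; rewrite IH. Qed.

Lemma route_from_shift n k x s :
  route_from (n + k) (x + k) (map (addn^~ k) s) = route_from n x s.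
Proof.
rewrite /route_from -[x + k]/((addn^~ k) x) path_map (last_map (addn^~ k)) -addSn eqn_add2r.
congr (_ && _).
by apply: eq_path => a b /=; rewrite ltn_add2r.
Qed.

Lemma is_max_route_weight_uniq n W m1 m2 :
  is_max_route_weight n W m1 -> is_max_route_weight n W m2 -> m1 = m2.
Proof.
move=> [ub1 [s1 r1 e1]] [ub2 [s2 r2 e2]].
by apply/eqP; rewrite eqn_leq -{1}e1 ub2 // -e2 ub1.
Qed.

Lemma is_max_route_weight_eq_in n W1 W2 m :
  {in gtn n &, W1 =2 W2} -> is_max_route_weight n W1 m -> is_max_route_weight n W2 m.
Proof.
move=> eqW [ub [s r ws]].
have eq_walk t : route_from n 0 t -> walk_weight W2 0 t = walk_weight W1 0 t.
  by move=> /route_from_ltn; apply: walk_weight_eq_in => a b aN bN; rewrite eqW.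
by split=> [t rt|]; [rewrite eq_walk ?ub | exists s; rewrite ?eq_walk].
Qed.

Definition direct_route (n : nat) : seq nat := if n.-1 is 0 then [::] else [:: n.-1].

Lemma route_direct n : 0 < n -> route_from n 0 (direct_route n).
Proof. by rewrite /route_from; case: n => [|[|n]] //= _. Qed.

Lemma is_max_route_weight0 n W : 0 < n ->
  (forall a b, a < b < n -> W a b = false) -> is_max_route_weight n W 0.
Proof.
move=> n0 W0.
have walk0 s : route_from n 0 s -> walk_weight W 0 s = 0.
  by move=> rs; case/andP: (route_from_ltn rs) => _; apply: walk_weight_eq0 (proj1 (andP rs)).
split=> [s /walk0 -> //|]; exists (direct_route n); rewrite ?walk0 //; exact: route_direct.
Qed.

Lemma map_subnK k s : all (leq k) s -> map (addn^~ k) (map (subn^~ k) s) = s.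
Proof.
by move=> ks; rewrite -map_comp map_id_in // => z /(allP ks) kz /=; rewrite subnK.
Qed.

Section FirstHeavyEdge.
Variables (W : nat -> nat -> bool) (n k m : nat).
Hypothesis lt_kn : k < n.
Hypothesis light_below : forall a b, a < b < k -> W a b = false.
Hypothesis tail_max : is_max_route_weight (n - k) (wshift k W) m.

Lemma walk_weight_from_k s : route_from n k s -> walk_weight W k s <= m.
Proof.
move=> rs.
have ks : all (leq k) s.
  by apply: sub_all (order_path_min ltn_trans (proj1 (andP rs))) => z /ltnW.
rewrite -(map_subnK ks) -[k]add0n -walk_weight_shift.
apply: (proj1 tail_max); rewrite -(route_from_shift _ k) add0n.
by rewrite map_subnK // subnK // ltnW.
Qed.

Lemma walk_weight_tail y s : k <= y -> route_from n y s -> walk_weight W y s <= m.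
Proof.
rewrite leq_eqVlt => /orP[/eqP <-|ky rs]; first exact: walk_weight_from_k.
apply: leq_trans (walk_weight_from_k (s := y :: s) _); first exact: leq_addl.
by rewrite /route_from /= ky.
Qed.

(* A route collects nothing before it leaves {0..k-1} and at most one on the edge
   that leaves it; from then on it is bounded by the tail. *)
Lemma walk_weight_head x s : x < k -> route_from n x s -> walk_weight W x s <= m.+1.
Proof.
elim: s x => [|y s IH] x xk; first by case/andP=> _ /eqP /= xn; lia.
case/andP=> /= /andP[xy ys] ls.
have rys : route_from n y s by rewrite /route_from ys.
case: (ltnP y k) => yk; first by rewrite light_below ?xy // IH.
by rewrite -add1n leq_add ?leq_b1 ?walk_weight_tail.
Qed.

Lemma is_max_route_weight_first_heavy j : j < k -> W j k ->
  is_max_route_weight n W m.+1.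
Proof.
move=> jk Wjk; have k_gt0 : 0 < k := leq_ltn_trans (leq0n j) jk.
split=> [s rs|]; first exact: walk_weight_head k_gt0 rs.
case: tail_max => _ [t rt wt].
pose s := map (addn^~ k) t.
have rs : route_from n k s by rewrite -[k]add0n -{1}(subnK (ltnW lt_kn)) route_from_shift.
have ws : walk_weight W k s = m by rewrite -wt -[k]add0n -walk_weight_shift.
have [j0 | j_gt0] := posnP j.
  exists (k :: s); last by rewrite /= ws -j0 Wjk.
  by case/andP: rs => *; apply/andP; split=> //=; apply/andP.
exists (j :: k :: s); last by rewrite /= light_below ?j_gt0 // Wjk ws.
by case/andP: rs => *; apply/andP; split=> //=; rewrite j_gt0 jk.
Qed.

End FirstHeavyEdge.

Definition first_heavy (W : nat -> nat -> bool) (k : nat) : Prop :=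
  (forall a b, a < b < k -> W a b = false) /\ exists2 j, j < k & W j k.

Lemma first_heavy_uniq W k1 k2 : first_heavy W k1 -> first_heavy W k2 -> k1 = k2.
Proof.
wlog lt_k12 : k1 k2 / k1 <= k2 => [hyp h1 h2|[_ [j1 jk1 Wjk1]] [light2 _]].
  by case: (leqP k1 k2) => [/hyp|/ltnW /hyp] ->.
apply/eqP; rewrite eqn_leq lt_k12 leqNgt; apply/negP => lt_k12'.
by rewrite light2 ?jk1 in Wjk1.
Qed.

Lemma first_heavy_or_light W n :
  (exists2 k, k < n & first_heavy W k) \/ (forall a b, a < b < n -> W a b = false).
Proof.
pose heavy_into b := (b < n) && has (W^~ b) (iota 0 b).
have heavy_intoP a b : a < b < n -> W a b -> heavy_into b.
  by case/andP=> ab bn Wab; rewrite /heavy_into bn; apply/hasP; exists a; rewrite ?mem_iota.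
have [/hasP [b _ hb] | no_heavy] := boolP (has heavy_into (iota 0 n)); [left | right].
  case: (ex_minnP (ex_intro _ b hb)) => k /andP[kn /hasP[j]] + Wjk min_k.
  rewrite mem_iota => /andP[_ jk]; exists k => //; split; last by exists j.
  move=> a c /andP[ac ck]; apply/negbTE/negP => Wac.
  have /min_k : heavy_into c by apply: (heavy_intoP a); rewrite ?ac ?(ltn_trans ck kn).
  by rewrite leqNgt ck.
move=> a b abn; apply/negbTE/negP => /(heavy_intoP _ _ abn) hb.
have bn : b < n by case/andP: abn.
by move/hasPn: no_heavy => /(_ b); rewrite mem_iota bn hb => /(_ isT).
Qed.

Section RouteEncoding.
Variables (n : nat) (w : weighting n).

Definition nat_weighting (a b : nat) : bool :=
  if (insub a, insub b) is (Some x, Some y) then w (x, y) else false.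

Lemma nat_weightingE (x y : 'I_n) : nat_weighting x y = w (x, y).
Proof. by rewrite /nat_weighting !valK. Qed.

Lemma path_weight_cons (x : 'I_n) u :
  path_weight w (x :: u) = walk_weight nat_weighting x (map val u).
Proof.
elim: u x => [|y u IH] x; first by rewrite /path_weight big_nil.
by rewrite /path_weight /= big_cons -/(path_weight w (y :: u)) IH nat_weightingE.
Qed.

Definition path_vals (A : {set 'I_n}) : seq nat := map val (path_of A).

Lemma sorted_path_vals A : sorted ltn (path_vals A).
Proof.
rewrite ltn_sorted_uniq_leq map_inj_uniq ?sort_uniq ?enum_uniq //; last exact: val_inj.
by rewrite sorted_map; apply: sort_sorted => a b; apply: leq_total.
Qed.

Lemma mem_path_vals A z : (z \in path_vals A) = [exists i in A, val i == z].
Proof.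
apply/mapP/existsP => [[i]|[i /andP[iA /eqP <-]]].
  by rewrite mem_sort mem_enum => iA ->; exists i; rewrite iA eqxx.
by exists i; rewrite // mem_sort mem_enum.
Qed.

Lemma path_vals_route A : is_path_1_n A ->
  exists2 s, path_vals A = 0 :: s & route_from n 0 s.
Proof.
case/andP=> has0 has_last; rewrite -!mem_path_vals in has0 has_last.
have vals_lt : all (gtn n) (path_vals A).
  by apply/allP => z; rewrite mem_path_vals => /existsP[i /andP[_ /eqP <-]] /=.
move: (sorted_path_vals A) has0 has_last vals_lt; case: (path_vals A) => [//|y s] ys.
have y_min := order_path_min ltn_trans ys.
rewrite in_cons => /orP[/eqP y0|/(allP y_min)//] has_last vals_lt; subst y.
have last_lt : last 0 s < n by move/allP: vals_lt; apply; apply: mem_last.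
have last_ge := leq_last ys has_last.
by exists s; rewrite // /route_from -/(sorted ltn (0 :: s)) ys; apply/eqP; lia.
Qed.

Definition route_set (s : seq nat) : {set 'I_n} := [set i | val i \in 0 :: s].

Lemma in_route_set s i : (i \in route_set s) = (val i \in 0 :: s).
Proof. by rewrite inE. Qed.

Lemma path_vals_route_set s : route_from n 0 s -> path_vals (route_set s) = 0 :: s.
Proof.
move=> rs; have s_lt := route_from_ltn rs.
apply: (irr_sorted_eq ltn_trans ltnn (sorted_path_vals _)); first by case/andP: rs.
move=> z; rewrite mem_path_vals; apply/existsP/idP => [[i]|zs].
  by rewrite in_route_set => /andP[+ /eqP <-].
by exists (Ordinal (allP s_lt z zs)); rewrite in_route_set zs eqxx.
Qed.

Lemma route_set_path_1_n s : route_from n 0 s -> is_path_1_n (route_set s).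
Proof.
move=> rs; have n_gt0 : 0 < n by case/andP: (route_from_ltn rs).
apply/andP; split; apply/existsP.
  by exists (Ordinal n_gt0); rewrite in_route_set mem_head.
have lt_pred : n.-1 < n by rewrite prednK.
exists (Ordinal lt_pred); rewrite in_route_set eqxx andbT.
by case/andP: rs => _ /eqP/(congr1 predn) /= <-; apply: mem_last.
Qed.

Lemma Xmax_is_max_route_weight : 0 < n -> is_max_route_weight n nat_weighting (Xmax w).
Proof.
move=> n_gt0.
have weight_route A s : path_vals A = 0 :: s -> path_weight w (path_of A) = walk_weight nat_weighting 0 s.
  by rewrite /path_vals; case: (path_of A) => [//|x u] [x0 <-]; rewrite path_weight_cons x0.
split=> [s rs|].
  rewrite -(weight_route _ _ (path_vals_route_set rs)).
  exact: (leq_bigmax_cond (F := fun A => path_weight w (path_of A)) _ (route_set_path_1_n rs)).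
have some_path : 0 < #|[pred A : {set 'I_n} | is_path_1_n A]|.
  by apply/card_gt0P; exists (route_set (direct_route n)); rewrite inE route_set_path_1_n ?route_direct.
rewrite /Xmax; have [A pA ->] := eq_bigmax_cond (fun A => path_weight w (path_of A)) some_path.
by have [s vals_A rs] := path_vals_route pA; exists s; rewrite ?(weight_route _ _ vals_A).
Qed.

End RouteEncoding.

Definition restrict (E E1 : finType) (phi : E1 -> E) (w : {ffun E -> bool}) : {ffun E1 -> bool} :=
  [ffun e1 => w (phi e1)].

(* The edges among the vertices 0..k and among k..m, embedded in the tournament on
   0..m; because of [inord], [head_pair] is faithful only when [k <= m]. *)
Section Blocks.
Variables m k : nat.

Definition head_pair (e : 'I_k * 'I_k.+1) : 'I_m.+1 * 'I_m.+1 := (inord e.1, inord e.2).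

Definition tail_pair (e : 'I_(m.+1 - k) * 'I_(m.+1 - k)) : 'I_m.+1 * 'I_m.+1 :=
  (inord (e.1 + k), inord (e.2 + k)).

Lemma tail_pairE e : (val (tail_pair e).1, val (tail_pair e).2) = (e.1 + k, e.2 + k).
Proof. by rewrite /= !inordK //; case: e => [[a ?] [b ?]] /=; lia. Qed.

Lemma tail_pair_inj : injective tail_pair.
Proof.
move=> e e' /(congr1 (fun e => (val e.1, val e.2))); rewrite !tail_pairE.
by case=> /addIn eq1 /addIn eq2; apply: injective_projections; apply: val_inj.
Qed.

Hypothesis le_km : k <= m.

Lemma head_pairE e : (val (head_pair e).1, val (head_pair e).2) = (val e.1, val e.2).
Proof. by rewrite /= !inordK //; case: e => [[a ?] [b ?]] /=; lia. Qed.

Lemma head_pair_inj : injective head_pair.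
Proof.
move=> e e' /(congr1 (fun e => (val e.1, val e.2))); rewrite !head_pairE.
by case=> eq1 eq2; apply: injective_projections; apply: val_inj.
Qed.

Lemma head_tail_disjoint e e' : head_pair e != tail_pair e'.
Proof.
apply/negP => /eqP /(congr1 (fun e => val e.1)) /=.
have := head_pairE e; have := tail_pairE e'; case=> -> _ [-> _].
by case: e => [[a ?] ?] /=; lia.
Qed.

End Blocks.

Arguments head_pair : clear implicits.
Arguments tail_pair : clear implicits.

Lemma sum_ord_ltn n b : \sum_(a < n) (a < b : nat) = minn n b.
Proof.
elim: n => [|n IH]; first by rewrite big_ord0 min0n.
by rewrite big_ord_recr /= IH; case: ltnP => /= ?; lia.
Qed.

Section HeadEvent.
Variable k : nat.

Definition inner_edge (e : 'I_k * 'I_k.+1) : bool := e.1 < e.2 < k.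
Definition into_last (e : 'I_k * 'I_k.+1) : bool := e.2 == k :> nat.

Definition first_heavy_event (u : {ffun 'I_k * 'I_k.+1 -> bool}) : bool :=
  [forall e, inner_edge e ==> ~~ u e] &&
  ~~ [forall e, inner_edge e || into_last e ==> ~~ u e].

Lemma count_inner_edges : \sum_e (inner_edge e : nat) = 'C(k, 2).
Proof.
rewrite -(pair_bigA _ (fun a b => (inner_edge (a, b) : nat))) exchange_big big_ord_recr /=.
rewrite [X in _ + X]big1 ?addn0 => [|a _]; last by rewrite /inner_edge /= ltnn andbF.
rewrite -bin2_sum big_mkord; apply: eq_bigr => b _.
rewrite (eq_bigr (fun a : 'I_k => (a < b : nat))) => [|a _]; last by rewrite /inner_edge /= ltn_ord andbT.
by rewrite sum_ord_ltn; apply/minn_idPr/ltnW.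
Qed.

Lemma count_into_last : \sum_e (into_last e : nat) = k.
Proof.
rewrite -(pair_bigA _ (fun a b => (into_last (a, b) : nat))) exchange_big big_ord_recr /=.
rewrite big1 => [|b _]; last by rewrite big1 // => a _; rewrite /into_last /= ltn_eqF.
by rewrite add0n (eq_bigr (fun => 1)) ?sum1_card ?card_ord // => a _; rewrite /into_last /= eqxx.
Qed.

Lemma count_inner_or_last : \sum_e (inner_edge e || into_last e : nat) = 'C(k, 2) + k.
Proof.
rewrite -count_inner_edges -[X in _ + X]count_into_last -big_split; apply: eq_bigr => e _ /=.
by case/boolP: (inner_edge e) => //= /andP[_ lt_k]; rewrite /into_last ltn_eqF.
Qed.

End HeadEvent.

Lemma first_heavy_eventP m k (w : weighting m.+1) : k <= m ->
  reflect (first_heavy (nat_weighting w) k) (first_heavy_event (restrict (head_pair m k) w)).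
Proof.
move=> le_km.
have headE e : restrict (head_pair m k) w e = nat_weighting w e.1 e.2.
  by rewrite ffunE -nat_weightingE; have [-> ->] := head_pairE le_km e.
apply: (iffP andP) => [[/forallP light /forallPn [e]]|[light [j jk Wjk]]].
  rewrite negb_imply negbK headE => /andP[/orP[inner|/eqP e2k] We].
    by move: (light e); rewrite inner headE We.
  split; last by rewrite e2k in We; exists e.1.
  move=> a b /andP[ab bk]; apply/negbTE/negP => Wab.
  have ak : a < k by apply: ltn_trans bk.
  have bk1 : b < k.+1 by apply: ltnW.
  by move: (light (Ordinal ak, Ordinal bk1)); rewrite /inner_edge /= ab bk headE Wab.
split.
  by apply/forallP => e; apply/implyP => /andP[ab bk]; rewrite headE light ?ab.
apply/forallPn; exists (Ordinal jk, ord_max).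
by rewrite negb_imply negbK /into_last /= eqxx orbT headE.
Qed.

Lemma wshift_restrict_tail m k (w : weighting m.+1) :
  {in gtn (m.+1 - k) &, nat_weighting (restrict (tail_pair m k) w) =2 wshift k (nat_weighting w)}.
Proof.
move=> a b ha hb.
rewrite -[a]/(nat_of_ord (Ordinal ha)) -[b]/(nat_of_ord (Ordinal hb)) nat_weightingE ffunE.
by rewrite -nat_weightingE /wshift; have [-> ->] := tail_pairE (Ordinal ha, Ordinal hb).
Qed.

Lemma Xmax_first_heavy_split m (w : weighting m.+1) :
  Xmax w = \sum_(1 <= k < m.+1)
    first_heavy_event (restrict (head_pair m k) w) * (Xmax (restrict (tail_pair m k) w)).+1.
Proof.
set W := nat_weighting w; have maxW := Xmax_is_max_route_weight w (ltn0Sn m).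
have no_event k : 1 <= k < m.+1 -> ~ first_heavy W k ->
    first_heavy_event (restrict (head_pair m k) w) = false.
  by case/andP=> _ lt_km not_fh; apply/(first_heavy_eventP w lt_km).
have [[k0 lt_k0m fh0] | light] := first_heavy_or_light W m.+1; last first.
  rewrite (is_max_route_weight_uniq maxW (is_max_route_weight0 _ light)) //.
  rewrite big1_seq // => k /andP[_]; rewrite mem_index_iota => k_range.
  rewrite no_event // => [[_ [j jk Wjk]]]; case/andP: k_range => _ km.
  by rewrite light ?jk in Wjk.
have [light0 [j jk0 Wjk0]] := fh0; have k0_gt0 : 0 < k0 := leq_ltn_trans (leq0n j) jk0.
rewrite (bigD1_seq k0) ?iota_uniq ?mem_index_iota ?k0_gt0 //= big1_seq => [|k /andP[k_neq]].
  rewrite (introT (first_heavy_eventP w lt_k0m) fh0) mul1n addn0.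
  set wt := restrict _ w.
  have maxt : is_max_route_weight (m.+1 - k0) (wshift k0 W) (Xmax wt).
    apply: is_max_route_weight_eq_in (wshift_restrict_tail w) _.
    by apply: Xmax_is_max_route_weight; rewrite subn_gt0.
  exact: is_max_route_weight_uniq maxW (is_max_route_weight_first_heavy lt_k0m light0 maxt jk0 Wjk0).
rewrite mem_index_iota => k_range; rewrite no_event // => fh.
by rewrite (first_heavy_uniq fh fh0) eqxx in k_neq.
Qed.

Local Open Scope ring_scope.

Lemma prodr_indicator (R : comRingType) (T : finType) (P : pred T) :
  \prod_x ((P x)%:R : R) = [forall x, P x]%:R.
Proof.
have [/forallP allP | /forallPn [x Px]] := boolP [forall x, P x].
  by rewrite big1 // => x _; rewrite allP.
by rewrite (bigD1 x) //= (negbTE Px) mul0r.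
Qed.

Lemma prodr_const_count (R : comRingType) (T : finType) (P : pred T) (c : R) :
  \prod_(x | P x) c = c ^+ (\sum_x (P x : nat))%N.
Proof. by rewrite big_mkcond -prodrXr; apply: eq_bigr => x _; case: (P x). Qed.

Definition prod_mass (R : comRingType) (E : finType) (mu : E -> bool -> R)
  (w : {ffun E -> bool}) : R := \prod_e mu e (w e).

Section ProductMass.
Variables (R : comRingType) (E : finType).

Lemma prod_preimage_pick (E1 : finType) (phi : E1 -> E) (F : E -> E1 -> R) :
  injective phi ->
  \prod_e (if [pick e1 | phi e1 == e] is Some e1 then F e e1 else 1) = \prod_e1 F (phi e1) e1.
Proof.
move=> phi_inj; rewrite (bigID [in phi @: setT]) /= [X in _ * X]big1 ?mulr1; last first.
  move=> e phi_e; case: pickP => // e1 /eqP eq_e.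
  by move: phi_e; rewrite -eq_e imset_f.
rewrite big_imset /=; last by move=> a b _ _; apply: phi_inj.
apply: eq_big => [e1|e1 _]; first by rewrite inE.
by case: pickP => [e2 /eqP /phi_inj -> //|/(_ e1)]; rewrite eqxx.
Qed.

Let pick_factor (E' : finType) (phi : E' -> E) (G : E' -> bool -> R) e b : R :=
  if [pick e' | phi e' == e] is Some e' then G e' b else 1.

Lemma indicator_restrict (E' : finType) (phi : E' -> E) (u : {ffun E' -> bool}) w :
  injective phi ->
  (restrict phi w == u)%:R = \prod_e pick_factor phi (fun e' b => (b == u e')%:R) e (w e).
Proof.
move=> phi_inj; rewrite /pick_factor (prod_preimage_pick (fun e e' => (w e == u e')%:R)) //.
rewrite prodr_indicator; congr (nat_of_bool _)%:R.
by apply/eqP/forallP => [<- e'|eq_u]; [rewrite ffunE | apply/ffunP => e'; rewrite ffunE; apply/eqP].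
Qed.

Variable mu : E -> bool -> R.
Hypothesis mu_sum1 : forall e, mu e true + mu e false = 1.

Lemma sum_prod_mass : \sum_w prod_mass mu w = 1.
Proof. by rewrite -bigA_distr_bigA big1 // => e _; rewrite big_bool; apply: mu_sum1. Qed.

Lemma sum_prod_mass_none (P : pred E) :
  \sum_w prod_mass mu w * [forall e, P e ==> ~~ w e]%:R = \prod_(e | P e) mu e false.
Proof.
transitivity (\sum_(w : {ffun E -> bool}) \prod_e (mu e (w e) * (P e ==> ~~ w e)%:R)).
  by apply: eq_bigr => w _; rewrite big_split prodr_indicator.
rewrite -(bigA_distr_bigA (fun e b => mu e b * (P e ==> ~~ b)%:R)) [RHS]big_mkcond.
by apply: eq_bigr => e _; rewrite big_bool; case: (P e); rewrite /= ?mulr1 ?mulr0 ?add0r ?mu_sum1.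
Qed.

Section Independence.
Variables (E1 E2 : finType) (phi1 : E1 -> E) (phi2 : E2 -> E).
Hypotheses (phi1_inj : injective phi1) (phi2_inj : injective phi2).
Hypothesis phi12_disj : forall e1 e2, phi1 e1 != phi2 e2.

Lemma sum_prod_mass_restrict2 u1 u2 :
  \sum_(w | (restrict phi1 w == u1) && (restrict phi2 w == u2)) prod_mass mu w =
  prod_mass (mu \o phi1) u1 * prod_mass (mu \o phi2) u2.
Proof.
pose g e b := mu e b * pick_factor phi1 (fun e1 b => (b == u1 e1)%:R) e b
                     * pick_factor phi2 (fun e2 b => (b == u2 e2)%:R) e b.
transitivity (\sum_(w : {ffun E -> bool}) \prod_e g e (w e)).
  rewrite big_mkcond; apply: eq_bigr => w _.
  rewrite !big_split /= -indicator_restrict // -indicator_restrict //.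
  by case: (_ == u1); case: (_ == u2); rewrite ?mulr1 ?mulr0.
rewrite -bigA_distr_bigA /=.
transitivity (\prod_e (pick_factor phi1 (fun e1 b => mu e (u1 e1)) e true *
                       pick_factor phi2 (fun e2 b => mu e (u2 e2)) e true)).
  apply: eq_bigr => e _; rewrite big_bool /g /pick_factor.
  case: pickP => [e1 /eqP <-|_]; case: pickP => [e2 /eqP e12|_].
  - by move: (phi12_disj e1 e2); rewrite e12 eqxx.
  - by rewrite !mulr1; case: (u1 e1); rewrite /= ?mulr1 ?mulr0 ?addr0 ?add0r.
  - by rewrite !mul1r; case: (u2 e2); rewrite /= ?mulr1 ?mulr0 ?addr0 ?add0r.
  - by rewrite !mulr1; apply: mu_sum1.
rewrite big_split /=.
by rewrite (prod_preimage_pick (fun e e1 => mu e (u1 e1))) // (prod_preimage_pick (fun e e2 => mu e (u2 e2))).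
Qed.

Lemma sum_prod_mass_indep (H : {ffun E1 -> bool} -> R) (G : {ffun E2 -> bool} -> R) :
  \sum_w prod_mass mu w * (H (restrict phi1 w) * G (restrict phi2 w)) =
  (\sum_u1 prod_mass (mu \o phi1) u1 * H u1) * (\sum_u2 prod_mass (mu \o phi2) u2 * G u2).
Proof.
rewrite (partition_big (fun w => (restrict phi1 w, restrict phi2 w)) predT) //=.
rewrite -(pair_big predT predT (fun u1 u2 => \sum_(w | (restrict phi1 w, restrict phi2 w) == (u1, u2))
    prod_mass mu w * (H (restrict phi1 w) * G (restrict phi2 w)))) /=.
rewrite mulr_suml; apply: eq_bigr => u1 _; rewrite mulr_sumr; apply: eq_bigr => u2 _.
rewrite (eq_bigr (fun w => prod_mass mu w * (H u1 * G u2))); last first.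
  by move=> w /eqP [-> ->].
rewrite -mulr_suml (eq_bigl _ _ (fun w => xpair_eqE _ _ _ _)) sum_prod_mass_restrict2.
by rewrite mulrACA.
Qed.

End Independence.

End ProductMass.

Section EdgeMass.
Variables (R : realFieldType) (p : R).

(* [wprob p w] unfolds to [prod_mass (@edge_mass n) w]. *)
Definition edge_mass (n : nat) (e : 'I_n * 'I_n) (b : bool) : R :=
  if (e.1 < e.2)%N then (if b then p else 1 - p) else (if b then 0 else 1).

Lemma edge_mass_sum1 n (e : 'I_n * 'I_n) : edge_mass e true + edge_mass e false = 1.
Proof. by rewrite /edge_mass; case: ifP; rewrite ?add0r // addrC subrK. Qed.

Lemma sum_wprob_Xmax n : (0 < n)%N ->
  \sum_(w : weighting n) wprob p w * (Xmax w).+1%:R = f p n + 1.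
Proof.
case: n => // n _.
transitivity (\sum_(w : weighting n.+1) (wprob p w * (Xmax w)%:R + prod_mass (@edge_mass n.+1) w)).
  by apply: eq_bigr => w _; rewrite -[(Xmax w).+1]addn1 natrD mulrDr mulr1.
by rewrite big_split /= sum_prod_mass //; apply: edge_mass_sum1.
Qed.

Lemma prod_mass_tail m k (u : weighting (m.+1 - k)) :
  prod_mass (@edge_mass m.+1 \o tail_pair m k) u = wprob p u.
Proof.
apply: eq_bigr => e _; rewrite /= /edge_mass.
by have [-> ->] := tail_pairE e; rewrite ltn_add2r.
Qed.

Lemma sum_first_heavy_event m k : (k <= m)%N ->
  \sum_u prod_mass (@edge_mass m.+1 \o head_pair m k) u * (first_heavy_event u)%:R =
  (1 - (1 - p) ^+ k) * (1 - p) ^+ 'C(k, 2).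
Proof.
move=> le_km; set mu := _ \o _.
have mu_sum1 e : mu e true + mu e false = 1 by apply: edge_mass_sum1.
have mu_false (P : pred ('I_k * 'I_k.+1)) : (forall e, P e -> e.1 < e.2)%N ->
    \prod_(e | P e) mu e false = (1 - p) ^+ (\sum_e (P e : nat))%N.
  move=> P_edge; rewrite -prodr_const_count; apply: eq_bigr => e /P_edge.
  by rewrite /mu /= /edge_mass; have [-> ->] := head_pairE le_km e => ->.
have event_diff (u : {ffun 'I_k * 'I_k.+1 -> bool}) : (first_heavy_event u)%:R =
    [forall e, inner_edge e ==> ~~ u e]%:R - [forall e, inner_edge e || into_last e ==> ~~ u e]%:R :> R.
  rewrite /first_heavy_event; case: (boolP [forall e, _ || _ ==> _]) => [/forallP none|_].
    suff -> : [forall e, inner_edge e ==> ~~ u e] by rewrite subrr.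
    by apply/forallP => e; apply/implyP => inner; move/implyP: (none e); apply; rewrite inner.
  by rewrite andbT subr0.
under eq_bigr do rewrite event_diff mulrBr.
rewrite sumrB !sum_prod_mass_none // !mu_false => [|e /orP[/andP[]//|/eqP e2k]|e /andP[]//].
- by rewrite count_inner_edges count_inner_or_last exprD; ring.
- by rewrite e2k ltn_ord.
Qed.

End EdgeMass.

Lemma sum_wprob_first_heavy (R : realFieldType) (p : R) m k : (0 < k <= m)%N ->
  \sum_(w : weighting m.+1) wprob p w *
    (first_heavy_event (restrict (head_pair m k) w) * (Xmax (restrict (tail_pair m k) w)).+1)%:R
  = (1 - (1 - p) ^+ k) * (1 - p) ^+ 'C(k, 2) * (f p (m.+1 - k) + 1).
Proof.
case/andP=> k_gt0 le_km.
under eq_bigr do rewrite natrM.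
rewrite (sum_prod_mass_indep (@edge_mass_sum1 _ p m.+1) (head_pair_inj le_km) (@tail_pair_inj m k)
  (head_tail_disjoint le_km) (fun u => (first_heavy_event u)%:R) (fun u => (Xmax u).+1%:R)).
rewrite sum_first_heavy_event // (eq_bigr _ (fun u _ => congr1 (fun x => x * _) (prod_mass_tail p u))).
by rewrite sum_wprob_Xmax ?subn_gt0.
Qed.

Lemma f_first_heavy_split (R : realFieldType) (p : R) m :
  f p m.+1 = \sum_(1 <= k < m.+1) \sum_(w : weighting m.+1) wprob p w *
    (first_heavy_event (restrict (head_pair m k) w) * (Xmax (restrict (tail_pair m k) w)).+1)%:R.
Proof.
rewrite exchange_big; apply: eq_bigr => w _.
by rewrite -mulr_sumr -natr_sum -Xmax_first_heavy_split.
Qed.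

Unset Implicit Arguments.

Theorem lemma9 (R : realFieldType) (p : R) (hp0 : 0 < p) (hp1 : p < 1)
  (n : nat) (hn : (1 <= n)%N) :
  f p n = \sum_(2 <= i < n.+1)
            (1 - (1 - p) ^+ i.-1) * (1 - p) ^+ 'C(i.-1, 2) * (f p (n - i + 1) + 1).
Proof.
case: n hn => // m _.
rewrite f_first_heavy_split [RHS]big_add1 /=; apply: eq_big_nat => k /andP[k_gt0 lt_km].
by rewrite sum_wprob_first_heavy ?k_gt0 // subSS addn1 subSn.
Qed.
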